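(* Let $(\Phi,\mathtt{Prg},\mathrm{AT})$ be a CLC SPL with $\Phi=(\mathcal F,\phi)$. If a judgment $\theta;\Delta\vdash e:T$ occurs in a derivation of $\phi\vdash\mathtt{Prg}\ \textsc{ok}$ in the family-based type system, then $\theta\models\mathrm{AT}(T)$.
   Context: $\theta\models\theta'$ means $\theta\Rightarrow\theta'$ is a valid propositional formula. **Lightweight C (LC).** Types: $T ::= \mathtt{int}\mid \mathtt{void}* \mid \mathtt{struct}\ s*$. Expressions: $e ::= n \mid \mathtt{NULL}\mid x \mid f(e_1,\dots,e_k)$ ($k\ge0$) $\mid e\texttt{->}m \mid e\texttt{->}m=e \mid e\,?\,e:e \mid (e_1,\dots,e_k)$ ($k\ge1$) $\mid \mathsf{uop}\ e\mid e\ \mathsf{bop}\ e\mid \mathtt{MALLOC}(\mathtt{struct}\ s)\mid \mathtt{MFREE}(e)$. A struct definition is $\mathtt{struct}\ s\{T_1\,m_1;\dots;T_k\,m_k;\};$; a function definition is $T_0\ f(T_1\,x_1,\dots,T_k\,x_k)\{\mathtt{return}\ e;\}$; a program $\mathtt{Prg}=\overline{SD}\ \overline{FD}$ is a sequence of struct definitions followed by function definitions (distinct names), regarded as a finite map ($\mathtt{Prg}(s)$, $\mathtt{Prg}(s)(m)=T\,m$, $\mathtt{Prg}(f)$). $\mathtt{Prg}$ is *sane* if every struct name occurring in it is defined, every function name occurring in its function definitions is defined, and $\mathtt{Prg}(\mathtt{main})=\mathtt{int\ main}()\{\mathtt{return}\ e;\}$. Operator types: unary $-:(\mathtt{int})\to\mathtt{int}$,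 $!:(T)\to\mathtt{int}$; binary arithmetic, logical and ordering operators $(\mathtt{int},\mathtt{int})\to\mathtt{int}$; $==,!=:(T,T)\to\mathtt{int}$. Subtyping $\le$: reflexive closure of $\mathtt{void}*\le\mathtt{struct}\ s*$; $\max_\le$ the greater of two comparable types. **CLC.** Feature model $\Phi=(\mathcal F,\phi)$; annotation table $\mathrm{AT}$ assigns a propositional formula over $\mathcal F$ (default $1$) to each occurrence of: struct definitions, member declarations $T\,m$, function definitions, formal parameter declarations $T\,x$, arguments of function calls, elements of parenthesized sequences. $\mathrm{AT}(\mathtt{int})=\mathrm{AT}(\mathtt{void}* )=1$, $\mathrm{AT}(\mathtt{struct}\ s* )=\mathrm{AT}(\mathtt{Prg}(s))$; $\exists(e_1,\dots,e_n)=\mathrm{AT}(e_1)||\cdots||\mathrm{AT}(e_n)$; $\mathtt{neverLast}(k,(e_1,\dots,e_n))=\,!\mathrm{AT}(e_k)||\mathrm{AT}(e_{k+1})||\cdots||\mathrm{AT}(e_n)$. $\Delta$ maps parameter names to entries $x{:}T$ with $\psi$. Rules: (FT-prg) if $\mathtt{Prg}$ is sane, $\mathrm{AT}(\mathtt{main})=1$, $\mathtt{Prg}=\overline{SD}\,\overline{FD}$, $\phi\,\&\&\,\mathrm{AT}(SD)\vdash SD\ \textsc{ok}$ for each $SD$ and $\phi\,\&\&\,\mathrm{AT}(FD)\vdash FD\ \textsc{ok}$ for each $FD$, then $\phi\vdash\mathtt{Prg}\ \textsc{ok}$. (FT-struct) if $\theta\models\mathrm{AT}(T_i m_i)\Rightarrow\mathrm{AT}(T_i)$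 for all $i$ then $\theta\vdash\mathtt{struct}\ s\{\dots\}\ \textsc{ok}$. (FT-fun) if $\theta\models\mathrm{AT}(T_0)$, $\theta\models\mathrm{AT}(T_ix_i)\Rightarrow\mathrm{AT}(T_i)$ for all $i$, $\theta;x_1{:}T_1\text{ with }\mathrm{AT}(T_1x_1),\dots\vdash e:T'$, $T'\le T_0$, then $\theta\vdash T_0f(T_1x_1,\dots,T_kx_k)\{\mathtt{return}\ e;\}\ \textsc{ok}$. (FT-int) $\theta;\Delta\vdash n:\mathtt{int}$; (FT-null) $\theta;\Delta\vdash\mathtt{NULL}:\mathtt{void}*$; (FT-par) $x{:}T$ with $\psi\in\Delta$, $\theta\models\psi$ give $\theta;\Delta\vdash x:T$. (FT-app) $\mathtt{Prg}(f)=T_0f(T_1x_1,\dots,T_kx_k)\{\dots\}$, $\theta\models\mathrm{AT}(\mathtt{Prg}(f))$, and for each $i$: $\theta;\Delta\vdash e_i:T_i'$, $T_i'\le T_i$, $\theta\models\mathrm{AT}(e_i)\Leftrightarrow\mathrm{AT}(T_ix_i)$, give $\theta;\Delta\vdash f(e_1,\dots,e_k):T_0$. (FT-member) $\theta;\Delta\vdash e_0:\mathtt{struct}\ s*$, $\mathtt{Prg}(s)(m)=T\,m$, $\theta\models\mathrm{AT}(T\,m)$ give $\theta;\Delta\vdash e_0\texttt{->}m:T$; (FT-assign) additionally $\theta;\Delta\vdash e_1:T_1$, $T_1\le T$ give $\theta;\Delta\vdash e_0\texttt{->}m=e_1:T$. (FT-cond) $\theta;\Delta\vdash e_j:T_j$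 ($j=0,1,2$), $T_3=\max_\le\{T_1,T_2\}$ give $\theta;\Delta\vdash e_0?e_1:e_2:T_3$. (FT-seq) if $\theta\models\exists(e_1,\dots,e_n)$, $\theta\,\&\&\,\mathrm{AT}(e_i);\Delta\vdash e_i:T_i$ for all $i$, $T=T_n$, and $\theta\models\mathtt{neverLast}(i,(e_1,\dots,e_n))$ whenever $T_i\ne T$, then $\theta;\Delta\vdash(e_1,\dots,e_n):T$. (FT-uop) $\theta;\Delta\vdash e_0:T_0$ and $\mathsf{uop}:(T_0)\to\mathtt{int}$ give $\theta;\Delta\vdash\mathsf{uop}\,e_0:\mathtt{int}$; (FT-bop) $\theta;\Delta\vdash e_1:T_1$, $\theta;\Delta\vdash e_2:T_2$, $T_3=\max_\le\{T_1,T_2\}$, $\mathsf{bop}:(T_3,T_3)\to\mathtt{int}$ give $\theta;\Delta\vdash e_1\mathsf{bop}\,e_2:\mathtt{int}$. (FT-malloc) $s$ defined and $\theta\models\mathrm{AT}(\mathtt{Prg}(s))$ give $\theta;\Delta\vdash\mathtt{MALLOC}(\mathtt{struct}\ s):\mathtt{struct}\ s*$. (FT-mfree) $\theta;\Delta\vdash e_0:\mathtt{struct}\ s*$ gives $\theta;\Delta\vdash\mathtt{MFREE}(e_0):\mathtt{void}*$. *)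

From Stdlib Require Import List String Bool Arith.
Import ListNotations.
Set Implicit Arguments.

Section CLC.

(* Feature names (the set \mathcal F). *)
Variable V : Type.

Inductive form : Type :=
| FTrue
| FFalse
| FVar (x : V)
| FNot (a : form)
| FAnd (a b : form)
| FOr (a b : form)
| FImp (a b : form)
| FIff (a b : form).

Fixpoint feval (nu : V -> bool) (a : form) : bool :=
  match a with
  | FTrue => true
  | FFalse => false
  | FVar x => nu x
  | FNot a => negb (feval nu a)
  | FAnd a b => feval nu a && feval nu b
  | FOr a b => feval nu a || feval nu b
  | FImp a b => implb (feval nu a) (feval nu b)
  | FIff a b => Bool.eqb (feval nu a) (feval nu b)
  end.

Definition fvalid (a : form) : Prop := forall nu, feval nu a = true.

Definition models (th th' : form) : Prop := fvalid (FImp th th').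

(* ---------- LC syntax with CLC annotations (the annotation table AT is
   represented by attaching a formula to each annotatable occurrence) ---- *)
Definition name := string.

Inductive ty : Type :=
| TInt
| TVoidPtr
| TStructPtr (s : name).

Inductive uop : Type := UNeg | UNot.

Inductive bop : Type :=
| BAdd | BSub | BMul | BDiv | BMod
| BLAnd | BLOr
| BLt | BLe | BGt | BGe
| BEq | BNe.

Inductive expr : Type :=
| ENum (n : nat)
| ENull
| EVar (x : name)
| ECall (f : name) (args : list (form * expr))
| EMember (e : expr) (m : name)
| EAssign (e : expr) (m : name) (e1 : expr)
| ECond (e0 e1 e2 : expr)
| ESeq (es : list (form * expr))
| EUop (o : uop) (e : expr)
| EBop (o : bop) (e1 e2 : expr)
| EMalloc (s : name)
| EFree (e : expr).

Record member := Member { mty : ty; mname : name; mann : form }.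
Record sdef := SDef { sname : name; smembers : list member; sann : form }.
Record param := Param { pty : ty; pname : name; pann : form }.
Record fdef := FDef { fret : ty; fname : name; fparams : list param;
                      fbody : expr; fann : form }.
Record prog := Prog { pstructs : list sdef; pfuns : list fdef }.

Definition lookup_struct (P : prog) (s : name) : option sdef :=
  find (fun sd => String.eqb (sname sd) s) (pstructs P).
Definition lookup_fun (P : prog) (f : name) : option fdef :=
  find (fun fd => String.eqb (fname fd) f) (pfuns P).
Definition lookup_member (sd : sdef) (m : name) : option member :=
  find (fun mb => String.eqb (mname mb) m) (smembers sd).

(* distinct names (so that Prg, Prg(s) and Delta are finite maps) *)
Definition wf_prog (P : prog) : Prop :=
  NoDup (map sname (pstructs P)) /\
  NoDup (map fname (pfuns P)) /\
  (forall sd, In sd (pstructs P) -> NoDup (map mname (smembers sd))) /\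
  (forall fd, In fd (pfuns P) -> NoDup (map pname (fparams fd))).

Definition ty_structs (T : ty) : list name :=
  match T with TStructPtr s => [s] | _ => [] end.

Fixpoint expr_structs (e : expr) : list name :=
  let fix go (l : list (form * expr)) : list name :=
      match l with [] => [] | (_, e) :: l => expr_structs e ++ go l end in
  match e with
  | ENum _ | ENull | EVar _ => []
  | ECall _ args => go args
  | EMember e _ => expr_structs e
  | EAssign e _ e1 => expr_structs e ++ expr_structs e1
  | ECond e0 e1 e2 => expr_structs e0 ++ expr_structs e1 ++ expr_structs e2
  | ESeq es => go es
  | EUop _ e => expr_structs e
  | EBop _ e1 e2 => expr_structs e1 ++ expr_structs e2
  | EMalloc s => [s]
  | EFree e => expr_structs e
  end.

Fixpoint expr_funs (e : expr) : list name :=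
  let fix go (l : list (form * expr)) : list name :=
      match l with [] => [] | (_, e) :: l => expr_funs e ++ go l end in
  match e with
  | ENum _ | ENull | EVar _ => []
  | ECall f args => f :: go args
  | EMember e _ => expr_funs e
  | EAssign e _ e1 => expr_funs e ++ expr_funs e1
  | ECond e0 e1 e2 => expr_funs e0 ++ expr_funs e1 ++ expr_funs e2
  | ESeq es => go es
  | EUop _ e => expr_funs e
  | EBop _ e1 e2 => expr_funs e1 ++ expr_funs e2
  | EMalloc _ => []
  | EFree e => expr_funs e
  end.

Definition prog_structs (P : prog) : list name :=
  map sname (pstructs P) ++
  flat_map (fun sd => flat_map (fun mb => ty_structs (mty mb)) (smembers sd))
           (pstructs P) ++
  flat_map (fun fd => ty_structs (fret fd) ++
                      flat_map (fun p => ty_structs (pty p)) (fparams fd) ++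
                      expr_structs (fbody fd)) (pfuns P).

Definition prog_funs (P : prog) : list name :=
  flat_map (fun fd => fname fd :: expr_funs (fbody fd)) (pfuns P).

Definition main_name : name := "main"%string.

Definition sane (P : prog) : Prop :=
  (forall s, In s (prog_structs P) -> exists sd, lookup_struct P s = Some sd) /\
  (forall f, In f (prog_funs P) -> exists fd, lookup_fun P f = Some fd) /\
  (exists e a, lookup_fun P main_name = Some (FDef TInt main_name [] e a)).

Variable P : prog.

(* AT(int) = AT(void* ) = 1, AT(struct s* ) = AT(Prg(s)) (s is defined in a
   sane program; the default 1 for undefined s is never used there). *)
Definition AT_ty (T : ty) : form :=
  match T with
  | TInt | TVoidPtr => FTrue
  | TStructPtr s => match lookup_struct P s with
                    | Some sd => sann sd
                    | None => FTrue
                    end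
  end.

Definition subty (T1 T2 : ty) : Prop :=
  T1 = T2 \/ (T1 = TVoidPtr /\ exists s, T2 = TStructPtr s).

Definition tmax (T1 T2 T3 : ty) : Prop :=
  (subty T1 T2 /\ T3 = T2) \/ (subty T2 T1 /\ T3 = T1).

Definition uop_ok (o : uop) (T0 : ty) : Prop :=
  match o with UNeg => T0 = TInt | UNot => True end.

Definition bop_ok (o : bop) (T3 : ty) : Prop :=
  match o with BEq | BNe => True | _ => T3 = TInt end.

Fixpoint fdisj (l : list form) : form :=
  match l with
  | [] => FFalse
  | [a] => a
  | a :: l => FOr a (fdisj l)
  end.

Definition ex_ann (es : list (form * expr)) : form := fdisj (map fst es).

Definition dflt_arg : form * expr := (FTrue, ENull).
Definition dflt_param : param := Param TInt ""%string FTrue.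

(* neverLast(k,(e_1..e_n)) = !AT(e_k) || AT(e_{k+1}) || ... || AT(e_n),
   with 0-based index k *)
Definition neverLast (k : nat) (es : list (form * expr)) : form :=
  match skipn (S k) es with
  | [] => FNot (fst (nth k es dflt_arg))
  | rest => FOr (FNot (fst (nth k es dflt_arg))) (ex_ann rest)
  end.

Definition ctx := list (name * ty * form).

Definition lookup_ctx (D : ctx) (x : name) : option (ty * form) :=
  match find (fun en => String.eqb (fst (fst en)) x) D with
  | Some (_, T, psi) => Some (T, psi)
  | None => None
  end.

Definition ctx_of (ps : list param) : ctx :=
  map (fun p => (pname p, pty p, pann p)) ps.

Record judg := Judg { jform : form; jctx : ctx; jexpr : expr; jty : ty }.

Inductive deriv : judg -> Type :=
| FT_int (th : form) (D : ctx) (n : nat) :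
    deriv (Judg th D (ENum n) TInt)
| FT_null (th : form) (D : ctx) :
    deriv (Judg th D ENull TVoidPtr)
| FT_par (th : form) (D : ctx) (x : name) (T : ty) (psi : form) :
    lookup_ctx D x = Some (T, psi) -> models th psi ->
    deriv (Judg th D (EVar x) T)
| FT_app (th : form) (D : ctx) (f : name) (args : list (form * expr))
    (fd : fdef) (Ts : nat -> ty) :
    lookup_fun P f = Some fd ->
    models th (fann fd) ->
    List.length args = List.length (fparams fd) ->
    (forall i, i < List.length args ->
       deriv (Judg th D (snd (nth i args dflt_arg)) (Ts i))) ->
    (forall i, i < List.length args ->
       subty (Ts i) (pty (nth i (fparams fd) dflt_param)) /\
       models th (FIff (fst (nth i args dflt_arg))
                       (pann (nth i (fparams fd) dflt_param)))) ->
    deriv (Judg th D (ECall f args) (fret fd))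
| FT_member (th : form) (D : ctx) (e0 : expr) (s m : name)
    (sd : sdef) (mb : member) :
    deriv (Judg th D e0 (TStructPtr s)) ->
    lookup_struct P s = Some sd -> lookup_member sd m = Some mb ->
    models th (mann mb) ->
    deriv (Judg th D (EMember e0 m) (mty mb))
| FT_assign (th : form) (D : ctx) (e0 e1 : expr) (s m : name)
    (sd : sdef) (mb : member) (T1 : ty) :
    deriv (Judg th D e0 (TStructPtr s)) ->
    lookup_struct P s = Some sd -> lookup_member sd m = Some mb ->
    models th (mann mb) ->
    deriv (Judg th D e1 T1) -> subty T1 (mty mb) ->
    deriv (Judg th D (EAssign e0 m e1) (mty mb))
| FT_cond (th : form) (D : ctx) (e0 e1 e2 : expr) (T0 T1 T2 T3 : ty) :
    deriv (Judg th D e0 T0) -> deriv (Judg th D e1 T1) ->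
    deriv (Judg th D e2 T2) -> tmax T1 T2 T3 ->
    deriv (Judg th D (ECond e0 e1 e2) T3)
| FT_seq (th : form) (D : ctx) (es : list (form * expr)) (Ts : nat -> ty)
    (T : ty) :
    0 < List.length es ->
    models th (ex_ann es) ->
    (forall i, i < List.length es ->
       deriv (Judg (FAnd th (fst (nth i es dflt_arg))) D
                   (snd (nth i es dflt_arg)) (Ts i))) ->
    T = Ts (List.length es - 1) ->
    (forall i, i < List.length es -> Ts i <> T -> models th (neverLast i es)) ->
    deriv (Judg th D (ESeq es) T)
| FT_uop (th : form) (D : ctx) (o : uop) (e0 : expr) (T0 : ty) :
    deriv (Judg th D e0 T0) -> uop_ok o T0 ->
    deriv (Judg th D (EUop o e0) TInt)
| FT_bop (th : form) (D : ctx) (o : bop) (e1 e2 : expr) (T1 T2 T3 : ty) :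
    deriv (Judg th D e1 T1) -> deriv (Judg th D e2 T2) ->
    tmax T1 T2 T3 -> bop_ok o T3 ->
    deriv (Judg th D (EBop o e1 e2) TInt)
| FT_malloc (th : form) (D : ctx) (s : name) (sd : sdef) :
    lookup_struct P s = Some sd -> models th (sann sd) ->
    deriv (Judg th D (EMalloc s) (TStructPtr s))
| FT_mfree (th : form) (D : ctx) (e0 : expr) (s : name) :
    deriv (Judg th D e0 (TStructPtr s)) ->
    deriv (Judg th D (EFree e0) TVoidPtr).

Fixpoint occurs (J : judg) (j : judg) (d : deriv j) {struct d} : Prop :=
  J = j \/
  match d with
  | @FT_int _ _ _ | @FT_null _ _ | @FT_par _ _ _ _ _ _ _
  | @FT_malloc _ _ _ _ _ _ => False
  | @FT_app _ _ _ _ _ _ _ _ _ ds _ => exists i (Hi : i < _), occurs J (ds i Hi)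
  | @FT_member _ _ _ _ _ _ _ d0 _ _ _ => occurs J d0
  | @FT_assign _ _ _ _ _ _ _ _ _ d0 _ _ _ d1 _ => occurs J d0 \/ occurs J d1
  | @FT_cond _ _ _ _ _ _ _ _ _ d0 d1 d2 _ =>
      occurs J d0 \/ occurs J d1 \/ occurs J d2
  | @FT_seq _ _ _ _ _ _ _ ds _ _ => exists i (Hi : i < _), occurs J (ds i Hi)
  | @FT_uop _ _ _ _ _ d0 _ => occurs J d0
  | @FT_bop _ _ _ _ _ _ _ _ d1 d2 _ _ => occurs J d1 \/ occurs J d2
  | @FT_mfree _ _ _ _ d0 => occurs J d0
  end.

Definition struct_ok (th : form) (sd : sdef) : Prop :=
  forall mb, In mb (smembers sd) -> models th (FImp (mann mb) (AT_ty (mty mb))).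

Inductive fun_ok (th : form) (fd : fdef) : Type :=
| FT_fun :
    models th (AT_ty (fret fd)) ->
    (forall p, In p (fparams fd) -> models th (FImp (pann p) (AT_ty (pty p)))) ->
    forall T', deriv (Judg th (ctx_of (fparams fd)) (fbody fd) T') ->
    subty T' (fret fd) ->
    fun_ok th fd.

Inductive prg_ok (phi : form) : Type :=
| FT_prg :
    sane P ->
    (forall fd, lookup_fun P main_name = Some fd -> fann fd = FTrue) ->
    (forall sd, In sd (pstructs P) -> struct_ok (FAnd phi (sann sd)) sd) ->
    (forall fd, In fd (pfuns P) -> fun_ok (FAnd phi (fann fd)) fd) ->
    prg_ok phi.

Definition fun_occurs (J : judg) (th : form) (fd : fdef) (d : fun_ok th fd)
  : Prop :=
  match d with @FT_fun _ _ _ _ _ db _ => occurs J db end.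

Definition occurs_prg (J : judg) (phi : form) (D : prg_ok phi) : Prop :=
  match D with
  | @FT_prg _ _ _ _ dfs =>
      exists fd (H : In fd (pfuns P)), fun_occurs J (dfs fd H)
  end.

End CLC.

(** Every rule that yields a pointer to a struct [s] also certifies
    [AT(Prg(s))]: [MALLOC] checks it directly, a member access inherits it from
    the well-formedness of the struct definition, a parameter from the
    well-formedness of the function signature, and a call from the return type
    of the callee.  Conditionals return one of two already-certified types.  The
    only subtle rule is the sequence: for a valuation satisfying [theta], take the
    LAST element [e_i] whose annotation holds (one does, by [Exists]); its
    [neverLast] condition is then false, so [T_i = T], and [e_i] was typed under
    [theta && AT(e_i)], which certifies [AT(T)]. *)
From Stdlib Require Import List String Bool Arith Lia.
Set Implicit Arguments.

Section Formulas.
Variable V : Type.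
Implicit Types (a b c : form V) (nu : V -> bool).

Lemma models_elim {a b nu} : models a b -> feval nu a = true -> feval nu b = true.
Proof. intros Hab Ha; specialize (Hab nu); simpl in Hab; now rewrite Ha in Hab. Qed.

Lemma models_intro a b :
  (forall nu, feval nu a = true -> feval nu b = true) -> models a b.
Proof. intros Hab nu; simpl; destruct (feval nu a) eqn:Ha; simpl; auto. Qed.

Lemma models_refl a : models a a.
Proof. now apply models_intro. Qed.

Lemma models_trans a b c : models a b -> models b c -> models a c.
Proof. intros Hab Hbc; apply models_intro; eauto using models_elim. Qed.

Lemma models_andl a b : models (FAnd a b) a.
Proof. apply models_intro; intros nu H; simpl in H; now apply andb_true_iff in H. Qed.

Lemma models_and a b c : models a b -> models a c -> models a (FAnd b c).
Proof.
  intros Hb Hc; apply models_intro; intros nu Ha; simpl.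
  now rewrite (models_elim Hb Ha), (models_elim Hc Ha).
Qed.

Lemma models_mp a b c : models a (FImp b c) -> models a b -> models a c.
Proof.
  intros Hbc Hb; apply models_intro; intros nu Ha.
  generalize (models_elim Hbc Ha); simpl; now rewrite (models_elim Hb Ha).
Qed.

Lemma fdisj_true nu (l : list (form V)) :
  feval nu (fdisj l) = true -> exists a, In a l /\ feval nu a = true.
Proof.
  induction l as [|a [|b l] IH]; simpl; try discriminate.
  - intros H; exists a; auto.
  - intros [H | H]%orb_true_iff.
    + exists a; auto.
    + destruct (IH H) as (c & Hc & Hc'); exists c; auto.
Qed.

Lemma ex_ann_true {nu} {es : list (form V * expr V)} :
  feval nu (ex_ann es) = true ->
  exists i, i < List.length es /\ feval nu (fst (nth i es (dflt_arg V))) = true.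
Proof.
  intros (a & (x & <- & Hx)%in_map_iff & Ha)%fdisj_true.
  destruct (In_nth _ _ (dflt_arg V) Hx) as (i & Hi & Hn).
  exists i; split; auto; now rewrite Hn.
Qed.

Lemma neverLast_true {nu i} {es : list (form V * expr V)} :
  feval nu (neverLast i es) = true ->
  feval nu (fst (nth i es (dflt_arg V))) = true ->
  exists k, i < k < List.length es /\ feval nu (fst (nth k es (dflt_arg V))) = true.
Proof.
  unfold neverLast; intros Hnl Hi.
  destruct (skipn (S i) es) as [|p l] eqn:E; simpl in Hnl; rewrite Hi in Hnl;
    try discriminate.
  rewrite <- E in Hnl.
  destruct (ex_ann_true Hnl) as (k & Hk & Hk').
  rewrite length_skipn in Hk; rewrite nth_skipn in Hk'.
  exists (S i + k); split; [lia | exact Hk'].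
Qed.

End Formulas.

Lemma exists_last_index (p : nat -> bool) n :
  (exists i, i < n /\ p i = true) ->
  exists i, i < n /\ p i = true /\ (forall k, i < k < n -> p k = false).
Proof.
  induction n as [|n IH]; intros (i & Hi & Hp); [lia|].
  destruct (p n) eqn:Hn.
  - exists n; repeat split; auto; lia.
  - destruct IH as (j & Hj & Hpj & Hlast).
    + exists i; split; auto.
      destruct (Nat.eq_dec i n) as [->|]; [congruence | lia].
    + exists j; repeat split; auto.
      intros k Hk; destruct (Nat.eq_dec k n) as [->|]; [exact Hn | apply Hlast; lia].
Qed.

Lemma ty_eq_dec (T1 T2 : ty) : {T1 = T2} + {T1 <> T2}.
Proof. decide equality; apply string_dec. Qed.

Lemma occurs_subderiv V (P : prog V) {J j} (d : deriv P j) (Hocc : occurs J d) :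
  inhabited (deriv P J) /\ models (jform J) (jform j) /\ jctx J = jctx j.
Proof.
  assert (Hd : inhabited (deriv P j)) by now constructor.
  revert Hd Hocc; induction d; simpl; intros Hd [-> | Hocc];
    try solve [split; [exact Hd | split; [apply models_refl | reflexivity]]];
    repeat match goal with
    | H : False |- _ => destruct H
    | H : _ \/ _ |- _ => destruct H
    | H : exists _ _, _ |- _ => destruct H as (? & ? & ?)
    end;
    eauto using inhabits.
  match goal with
  | IH : forall i (Hi : i < _), _ -> occurs J (?d i Hi) -> _,
    Hocc : occurs J (?d ?i ?Hi) |- _ =>
      destruct (IH i Hi (inhabits (d i Hi)) Hocc) as (HdJ & Hth & Hctx)
  end.
  split; [exact HdJ | split; [|exact Hctx]].
  eapply models_trans; [exact Hth | apply models_andl].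
Qed.

Section Soundness.
Variables (V : Type) (P : prog V) (phi : form V).

Hypothesis struct_ann :
  forall sd, In sd (pstructs P) -> struct_ok P (FAnd phi (sann sd)) sd.
Hypothesis ret_ann :
  forall fd, In fd (pfuns P) -> models (FAnd phi (fann fd)) (AT_ty P (fret fd)).

Definition ctx_ann_sound (th : form V) (D : ctx V) : Prop :=
  forall x T psi, lookup_ctx D x = Some (T, psi) -> models th (FImp psi (AT_ty P T)).

Lemma ctx_ann_sound_weaken th th' D :
  models th' th -> ctx_ann_sound th D -> ctx_ann_sound th' D.
Proof. intros Hth HD x T psi Hx; eapply models_trans; eauto. Qed.

Lemma ctx_of_ann_sound th (ps : list (param V)) :
  (forall p, In p ps -> models th (FImp (pann p) (AT_ty P (pty p)))) ->
  ctx_ann_sound th (ctx_of ps).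
Proof.
  intros Hps x T psi; unfold lookup_ctx.
  destruct (find _ _) as [[[y T0] psi0]|] eqn:E; [|discriminate].
  intros [= <- <-].
  apply find_some in E as [(p & [= _ <- <-] & Hp)%in_map_iff _].
  exact (Hps p Hp).
Qed.

Lemma member_ann th s sd m mb :
  models th phi -> models th (AT_ty P (TStructPtr s)) ->
  lookup_struct P s = Some sd -> lookup_member sd m = Some mb ->
  models th (mann mb) -> models th (AT_ty P (mty mb)).
Proof.
  intros Hphi Hs Hsd Hmb Hm; simpl in Hs; rewrite Hsd in Hs.
  apply find_some in Hsd as [Hsd _]; apply find_some in Hmb as [Hmb _].
  apply (models_mp (b := mann mb)); [|exact Hm].
  apply models_trans with (FAnd phi (sann sd)); [|exact (struct_ann _ Hsd _ Hmb)].
  now apply models_and.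
Qed.

Lemma seq_ann th (es : list (form V * expr V)) (Ts : nat -> ty) T :
  models th (ex_ann es) ->
  (forall i, i < List.length es ->
     models (FAnd th (fst (nth i es (dflt_arg V)))) (AT_ty P (Ts i))) ->
  (forall i, i < List.length es -> Ts i <> T -> models th (neverLast i es)) ->
  models th (AT_ty P T).
Proof.
  intros Hex Hes Hnl; apply models_intro; intros nu Hnu.
  set (ann i := feval nu (fst (nth i es (dflt_arg V)))).
  destruct (@exists_last_index ann _ (ex_ann_true (models_elim Hex Hnu)))
    as (i & Hi & Hai & Hlast).
  assert (HT : Ts i = T).
  { destruct (ty_eq_dec (Ts i) T) as [|Hne]; auto.
    destruct (neverLast_true (models_elim (Hnl i Hi Hne) Hnu) Hai)
      as (k & Hk & Hak).
    specialize (Hlast k Hk); unfold ann in Hlast; congruence. }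
  rewrite <- HT; apply (models_elim (Hes i Hi)); simpl.
  now rewrite Hnu.
Qed.

Lemma deriv_ann j (d : deriv P j) :
  models (jform j) phi -> ctx_ann_sound (jform j) (jctx j) ->
  models (jform j) (AT_ty P (jty j)).
Proof.
  induction d; simpl in *; intros Hphi HD;
    try solve [apply models_intro; reflexivity].
  - exact (models_mp (HD _ _ _ e) m).
  - apply find_some in e as [Hfd _].
    exact (models_trans (models_and Hphi m) (ret_ann _ Hfd)).
  - eapply member_ann; eauto.
  - eapply member_ann; eauto.
  - destruct t as [[_ ->] | [_ ->]]; auto.
  - subst T; apply (seq_ann es Ts); auto.
    intros i Hi; apply H; auto.
    + eapply models_trans; [apply models_andl | exact Hphi].
    + eapply ctx_ann_sound_weaken; [apply models_andl | exact HD].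
  - now rewrite e.
Qed.

End Soundness.

Theorem lemma3 (V : Type) (P : prog V) (phi : form V) (D : prg_ok P phi)
  (J : judg V) :
  wf_prog P ->
  occurs_prg J D ->
  models (jform J) (AT_ty P (jty J)).
Proof.
  intros _; destruct D as [Hsane Hmain Hstructs Hfuns]; simpl.
  intros (fd & Hfd & Hocc).
  assert (Hret : forall fd, In fd (pfuns P) ->
                   models (FAnd phi (fann fd)) (AT_ty P (fret fd)))
    by (intros f Hf; now destruct (Hfuns f Hf)).
  destruct (Hfuns fd Hfd) as [Hret_fd Hparams T' db Hsub]; simpl in Hocc.
  destruct (occurs_subderiv db Hocc) as ([dJ] & HJ & Hctx); simpl in HJ, Hctx.
  apply (deriv_ann Hstructs Hret dJ).
  - eapply models_trans; [exact HJ | apply models_andl].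
  - rewrite Hctx; eapply ctx_ann_sound_weaken; [exact HJ|].
    now apply ctx_of_ann_sound.
Qed.
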